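(* Consider a multi-layer perceptron with $L$ layers, where layer $\ell\in\{1,\ldots,L\}$ has weight matrix $W^{[\ell]}\in\mathbb{R}^{n^{[\ell]}\times n^{[\ell-1]}}$, bias $\theta^{[\ell]}\in\mathbb{R}^{n^{[\ell]}}$, and computes $y^{[\ell]}=f_\ell(W^{[\ell]}y^{[\ell-1]}+\theta^{[\ell]})$ with $f_\ell$ either the componentwise ReLU $z\mapsto\max(0,z)$ or the identity; $y^{[0]}=v^{[0]}$ is the network input and $g=f_L\circ\cdots$ denotes the resulting input-output map $v^{[0]}\mapsto y^{[L]}$. Let the input set be $\mathcal{V}^{[0]}=\bigcup_{s=1}^{N_0}\{v: H_s^{[0]}v\le b_s^{[0]}\}$. Define recursively $\mathcal{Y}^{[0]}=\mathcal{V}^{[0]}$ and, for $\ell=1,\ldots,L$ with $\mathcal{V}=\mathcal{Y}^{[\ell-1]}$, $W=W^{[\ell]}$, $\theta=\theta^{[\ell]}$, $n=n^{[\ell]}$: (i) if layer $\ell$ is linear, $\mathcal{Y}^{[\ell]}=\{Wv+\theta: v\in\mathcal{V}\}$; (ii) if layer $\ell$ is ReLU, $\mathcal{Y}^{[\ell]}=\bar{\mathcal{Y}}\cup\hat{\mathcal{Y}}\cup\bigcup_{m=1}^{2^n-2}\mathcal{Y}_m$, where $\bar{\mathcal{Y}}=\{0\}$ if $\{v\in\mathcal{V}: Wv+\theta\le 0\}\neq\emptyset$ and $\bar{\mathcal{Y}}=\emptyset$ otherwise; $\hat{\mathcal{Y}}=\{Wv+\theta: v\in\mathcal{V},\ Wv+\theta>0\}$;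 and $\mathcal{Y}_m=\{Q_m(Wv+\theta): v\in\mathcal{V},\ (I-Q_m)(Wv+\theta)\le0,\ Q_m(Wv+\theta)\ge 0\}$. Then the output reach set of the network satisfies $g(\mathcal{V}^{[0]})=\{g(v):v\in\mathcal{V}^{[0]}\}=\mathcal{Y}^{[L]}$.
   Context: Vector inequalities are componentwise ($>0$ means every component strictly positive). For a layer with $n$ neurons, $q_0,\ldots,q_{2^n-1}$ is an enumeration of $\{0,1\}^n$ with $q_0=(0,\ldots,0)$ and $q_{2^n-1}=(1,\ldots,1)$, and $Q_m=\mathrm{diag}(q_m)$; $I$ is the identity matrix. *)

From HB Require Import structures.
From mathcomp Require Import all_boot all_order all_algebra.
From mathcomp Require Import boolp classical_sets reals.
Set Implicit Arguments. Unset Strict Implicit. Unset Printing Implicit Defensive.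
Import Order.TTheory GRing.Theory Num.Theory.
Local Open Scope ring_scope.
Local Open Scope classical_set_scope.

Section MLP.
Variable R : realType.

Definition leV n (u v : 'cV[R]_n) : Prop := forall i, u i 0 <= v i 0.
Definition gtV0 n (u : 'cV[R]_n) : Prop := forall i, 0 < u i 0.

Definition relu n (z : 'cV[R]_n) : 'cV[R]_n := \col_i Num.max 0 (z i 0).

Definition Qmx n (q : {ffun 'I_n -> bool}) : 'M[R]_n := diag_mx (\row_i (q i)%:R).

(* Network description: layer k (k = 0..L-1) is the paper's layer k+1,
   mapping R^(dims k) to R^(dims k.+1); isrelu k says whether f_{k+1} is ReLU
   (otherwise the identity). *)
Variables (dims : nat -> nat)
          (W : forall k, 'M[R]_(dims k.+1, dims k))
          (theta : forall k, 'cV[R]_(dims k.+1))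
          (isrelu : nat -> bool).

Definition layer k (y : 'cV[R]_(dims k)) : 'cV[R]_(dims k.+1) :=
  let z := W k *m y + theta k in if isrelu k then relu z else z.

Fixpoint net (k : nat) : 'cV[R]_(dims 0%N) -> 'cV[R]_(dims k) :=
  match k return 'cV[R]_(dims 0%N) -> 'cV[R]_(dims k) with
  | O => fun v => v
  | k'.+1 => fun v => @layer k' (net k' v)
  end.

Definition layer_set k (V : set 'cV[R]_(dims k)) : set 'cV[R]_(dims k.+1) :=
  let aff := fun v => W k *m v + theta k in
  if isrelu k then
    [set y | y = 0 /\ [set v | V v /\ leV (aff v) 0] !=set0]
    `|` [set aff v | v in [set v | V v /\ gtV0 (aff v)]]
    (* union of Y_m over q_m different from (0,...,0) and (1,...,1) *)
    `|` [set y | exists q : {ffun 'I_(dims k.+1) -> bool},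
           [/\ q != [ffun=> false], q != [ffun=> true] &
            exists2 v, V v /\
              leV ((1%:M - Qmx q) *m aff v) 0 /\ leV 0 (Qmx q *m aff v)
            & y = Qmx q *m aff v]]
  else [set aff v | v in V].

Fixpoint reach (V0 : set 'cV[R]_(dims 0%N)) (k : nat) {struct k} : set 'cV[R]_(dims k) :=
  match k return set 'cV[R]_(dims k) with
  | O => V0
  | S k' => @layer_set k' (@reach V0 k')
  end.

End MLP.

Arguments reach {R dims} W theta isrelu V0 k.
Arguments layer_set {R dims} W theta isrelu k V.
Arguments net {R dims} W theta isrelu k.

Definition polyunion (R : realType) n (N0 : nat) (p : 'I_N0 -> nat)
  (H : forall s, 'M[R]_(p s, n)) (b : forall s, 'cV[R]_(p s)) : set 'cV[R]_n :=
  [set v | exists s : 'I_N0, leV (H s *m v) (b s)].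

From HB Require Import structures.
From mathcomp Require Import all_boot all_order all_algebra.
From mathcomp Require Import boolp classical_sets reals.
Set Implicit Arguments. Unset Strict Implicit. Unset Printing Implicit Defensive.
Import Order.TTheory GRing.Theory Num.Theory.
Local Open Scope ring_scope.
Local Open Scope classical_set_scope.

(* The ReLU acts on z as the diagonal projection Q_q onto the coordinates where
   z is positive, and Q_q z = relu z holds for every pattern q consistent with the
   signs of z, i.e. (I - Q_q) z <= 0 <= Q_q z. Hence the ReLU image of a set splits
   according to the activation pattern: the all-off pattern gives {0}, the all-on
   pattern gives the strictly positive part, and the remaining 2^n - 2 patterns give
   the sets Y_m. Propagating this identity through the layers yields the theorem. *)

Section ActivationPatterns.
Variables (R : realType) (n : nat).
Implicit Types (z : 'cV[R]_n) (q : {ffun 'I_n -> bool}).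

Lemma Qmx_mulE q z i : (Qmx R q *m z) i 0 = if q i then z i 0 else 0.
Proof. by rewrite /Qmx mul_diag_mx !mxE; case: (q i); rewrite ?mul1r ?mul0r. Qed.

Lemma Qmx_compl_mulE q z i :
  ((1%:M - Qmx R q) *m z) i 0 = if q i then 0 else z i 0.
Proof.
rewrite mulmxBl mul1mx; move: (Qmx_mulE q z i); rewrite !mxE => ->.
by case: (q i); rewrite ?subrr ?subr0.
Qed.

Lemma Qmx_false : Qmx R [ffun=> false] = 0 :> 'M[R]_n.
Proof. by apply/matrixP => i j; rewrite /Qmx !mxE ffunE mul0rn. Qed.

Lemma Qmx_true : Qmx R [ffun=> true] = 1%:M :> 'M[R]_n.
Proof. by apply/matrixP => i j; rewrite /Qmx !mxE ffunE. Qed.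

Definition activation z : {ffun 'I_n -> bool} := [ffun i => 0 < z i 0].

Lemma activation_sign z :
  leV ((1%:M - Qmx R (activation z)) *m z) 0 /\ leV 0 (Qmx R (activation z) *m z).
Proof.
split=> i; rewrite ?Qmx_compl_mulE ?Qmx_mulE !mxE ffunE.
- by case: ltP.
- by case: ltP => // /ltW.
Qed.

Lemma relu_sign_pattern q z :
  leV ((1%:M - Qmx R q) *m z) 0 -> leV 0 (Qmx R q *m z) -> relu z = Qmx R q *m z.
Proof.
move=> le0 ge0; apply/matrixP => i j; rewrite (ord1 j) Qmx_mulE mxE.
move: (le0 i) (ge0 i); rewrite Qmx_compl_mulE Qmx_mulE !mxE.
by case: (q i) => [_ zi_ge0 | zi_le0 _]; [exact: max_r | exact: max_l].
Qed.

Lemma relu_activation z : relu z = Qmx R (activation z) *m z.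
Proof. by case: (activation_sign z); apply: relu_sign_pattern. Qed.

Lemma relu_image_patterns (T : Type) (f : T -> 'cV[R]_n) (V : set T) :
  [set relu (f v) | v in V] =
    [set y | y = 0 /\ [set v | V v /\ leV (f v) 0] !=set0]
    `|` [set f v | v in [set v | V v /\ gtV0 (f v)]]
    `|` [set y | exists q : {ffun 'I_n -> bool},
           [/\ q != [ffun=> false], q != [ffun=> true] &
            exists2 v, V v /\ leV ((1%:M - Qmx R q) *m f v) 0 /\ leV 0 (Qmx R q *m f v)
            & y = Qmx R q *m f v]].
Proof.
apply/seteqP; split=> [_ [v Vv <-]|].
  have [le0 ge0] := activation_sign (f v).
  rewrite relu_activation.
  have [off|off] := eqVneq (activation (f v)) [ffun=> false].
    left; left; split; first by rewrite off Qmx_false mul0mx.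
    by exists v; split=> // i; move: (le0 i); rewrite off Qmx_false subr0 mul1mx.
  have [on|on] := eqVneq (activation (f v)) [ffun=> true].
    left; right; exists v; last by rewrite on Qmx_true mul1mx.
    split=> // i; move/ffunP/(_ i): on; by rewrite !ffunE => ->.
  by right; exists (activation (f v)); split=> //; exists v.
move=> y [[[-> [v [Vv le0]]]|[v [Vv gt0] <-]]|[q [_ _ [v [Vv [le0 ge0]] ->]]]].
- exists v => //; rewrite (@relu_sign_pattern [ffun=> false]) Qmx_false ?mul0mx //.
  by rewrite subr0 mul1mx.
- exists v => //; rewrite (@relu_sign_pattern [ffun=> true]) Qmx_true ?mul1mx //.
    by rewrite subrr mul0mx.
  by move=> i; rewrite mxE ltW.
- by exists v => //; apply: relu_sign_pattern.
Qed.

End ActivationPatterns.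

Section NetworkReach.
Variables (R : realType) (dims : nat -> nat).
Variables (W : forall k, 'M[R]_(dims k.+1, dims k)) (theta : forall k, 'cV[R]_(dims k.+1)).
Variable isrelu : nat -> bool.

Lemma image_layer k (V : set 'cV[R]_(dims k)) :
  layer W theta isrelu (k := k) @` V = layer_set W theta isrelu k V.
Proof.
rewrite /layer /layer_set; case: (isrelu k) => //.
exact: (relu_image_patterns (fun v => W k *m v + theta k)).
Qed.

Lemma image_net (V0 : set 'cV[R]_(dims 0%N)) k :
  net W theta isrelu k @` V0 = reach W theta isrelu V0 k.
Proof.
elim: k => [|k IH] /=; first exact: image_id.
by rewrite -IH -image_layer -image_comp.
Qed.

End NetworkReach.

Theorem proposition1 (R : realType) (L : nat) (dims : nat -> nat)
  (W : forall k, 'M[R]_(dims k.+1, dims k)) (theta : forall k, 'cV[R]_(dims k.+1))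
  (isrelu : nat -> bool)
  (N0 : nat) (p : 'I_N0 -> nat)
  (H : forall s, 'M[R]_(p s, dims 0%N)) (b : forall s, 'cV[R]_(p s)) :
  let V0 := polyunion H b in
  (net W theta isrelu L) @` V0 = reach W theta isrelu V0 L.
Proof. exact: image_net. Qed.
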